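(* If $\mathrm{char}(\Bbbk)=2$, then $G=\{g_1,g_2\}$ with $g_1=z^2+x^2y+y^5z^3$ and $g_2=y^3+x^4+y^3z^5+x^2y^4z^3$ is a standard basis of $P$ with respect to the negative degree reverse lexicographic order $>_{\rm ds}$.
   Context: $\Bbbk$ is a field, $\rho:\Bbbk[[x,y,z]]\to\Bbbk[[t]]$ is the $\Bbbk$-algebra morphism with $\rho(x)=t^6+t^{31}$, $\rho(y)=t^8$, $\rho(z)=t^{10}$, and $P=\ker\rho$. The order $>_{\rm ds}$ on monomials $x^\alpha=x^{\alpha_1}y^{\alpha_2}z^{\alpha_3}$: $x^\alpha>_{\rm ds}x^\beta$ iff $|\alpha|<|\beta|$, or $|\alpha|=|\beta|$ and there is $i\in\{1,2\}$ with $\alpha_3=\beta_3,\ldots,\alpha_{i+1}=\beta_{i+1}$ and $\alpha_i<\beta_i$ (so $1>x>y>z>x^2>xy>y^2>xz>yz>z^2>\cdots$). For $0\ne f\in\Bbbk[[x,y,z]]$, the leading monomial $\mathrm{LM}(f)$ is the $>_{\rm ds}$-largest monomial in the support of $f$. A finite set $G\subseteq I$ is a standard basis of an ideal $I\subseteq\Bbbk[[x,y,z]]$ if the ideal generated by $\{\mathrm{LM}(g):g\in G,g\neq0\}$ equals the ideal generated by $\{\mathrm{LM}(f): f\in I, f\ne0\}$. *)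

(* Formal power series in x,y,z over a field K, represented
   as coefficient functions on exponent triples (a1,a2,a3) <-> x^a1 y^a2 z^a3. *)
From mathcomp Require Import all_boot all_order all_algebra.
Set Implicit Arguments. Unset Strict Implicit. Unset Printing Implicit Defensive.
Import GRing.Theory.
Local Open Scope ring_scope.

Section PS.
Variable K : fieldType.

Fixpoint In {A : Type} (x : A) (l : seq A) : Prop :=
  if l is y :: l' then y = x \/ In x l' else False.

Definition mon := (nat * nat * nat)%type.
Definition e1 (a : mon) : nat := a.1.1.
Definition e2 (a : mon) : nat := a.1.2.
Definition e3 (a : mon) : nat := a.2.
Definition mdeg (a : mon) : nat := (e1 a + e2 a + e3 a)%N.

Definition ps := mon -> K.

Definition ps0 : ps := fun _ => 0.
Definition psadd (f g : ps) : ps := fun a => f a + g a.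
Definition psmul (f g : ps) : ps := fun a =>
  \sum_(i < (e1 a).+1) \sum_(j < (e2 a).+1) \sum_(k < (e3 a).+1)
     f ((i : nat, j : nat), k : nat) * g (((e1 a - i)%N, (e2 a - j)%N), (e3 a - k)%N).
Definition psmon (m : mon) : ps := fun a => if a == m then 1 else 0.

Definition us := nat -> K.
Definition usmul (p q : us) : us := fun n => \sum_(i < n.+1) p i * q (n - i)%N.
Definition us1 : us := fun n => if n == 0%N then 1 else 0.
Definition uspow (p : us) (k : nat) : us := iter k (usmul p) us1.

(* Substitution f(p1,p2,p3) for p1,p2,p3 with zero constant term (the unique
   local K-algebra morphism K[[x,y,z]] -> K[[t]] sending x,y,z to p1,p2,p3).
   Truncating each exponent at n is exact because p1^a p2^b p3^c has order
   >= a+b+c when the p_i have zero constant term. *)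
Definition subst (p1 p2 p3 : us) (f : ps) : us := fun n =>
  \sum_(a < n.+1) \sum_(b < n.+1) \sum_(c < n.+1)
     f ((a : nat, b : nat), c : nat) *
     usmul (uspow p1 a) (usmul (uspow p2 b) (uspow p3 c)) n.

Definition tpow (k : nat) : us := fun n => if n == k then 1 else 0.
Definition rho_x : us := fun n => tpow 6 n + tpow 31 n.
Definition rho_y : us := tpow 8.
Definition rho_z : us := tpow 10.

Definition rho (f : ps) : us := subst rho_x rho_y rho_z f.

Definition P (f : ps) : Prop := forall n, rho f n = 0.

Definition ds_gt (a b : mon) : Prop :=
  (mdeg a < mdeg b)%N \/
  (mdeg a = mdeg b /\
    ((e3 a < e3 b)%N \/
     (e3 a = e3 b /\ (e2 a < e2 b)%N) \/
     (e3 a = e3 b /\ e2 a = e2 b /\ (e1 a < e1 b)%N))).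

Definition ps_nonzero (f : ps) : Prop := exists a, f a != 0.

Definition is_LM (f : ps) (m : mon) : Prop :=
  f m != 0 /\ forall a, f a != 0 -> a = m \/ ds_gt m a.

Definition ideal_gen (S : ps -> Prop) (h : ps) : Prop :=
  exists l : seq (ps * ps),
    (forall p, In p l -> S p.2) /\
    h = foldr (fun p acc => psadd (psmul p.1 p.2) acc) ps0 l.

Definition standard_basis (I : ps -> Prop) (G : seq ps) : Prop :=
  (forall g, In g G -> I g) /\
  forall h,
    ideal_gen (fun s => exists g m, In g G /\ ps_nonzero g /\ is_LM g m
                                    /\ s = psmon m) h
    <-> ideal_gen (fun s => exists f m, I f /\ ps_nonzero f /\ is_LM f m
                                    /\ s = psmon m) h.

Definition X (a1 a2 a3 : nat) : ps := psmon ((a1, a2), a3).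

Definition g1 : ps := psadd (X 0 0 2) (psadd (X 2 1 0) (X 0 5 3)).
Definition g2 : ps :=
  psadd (X 0 3 0) (psadd (X 4 0 0) (psadd (X 0 3 5) (X 2 4 3))).

End PS.

From mathcomp Require Import all_boot all_order all_algebra.
From mathcomp Require Import zify ring.
From Stdlib Require Import FunctionalExtensionality.
Set Implicit Arguments. Unset Strict Implicit. Unset Printing Implicit Defensive.
Import GRing.Theory.
Local Open Scope ring_scope.

(* The monomial x^a y^b z^c is sent by rho to t^(8b+10c) (t^6 + t^31)^a, the sum
   of the t^(w + 25k), with multiplicity binomial(a, k), where w = 6a+8b+10c is
   its weight. In characteristic 2 every exponent of rho(g1) and of rho(g2) occurs
   an even number of times, so g1 and g2 lie in P.
   Conversely, let f in P have leading monomial m = x^a y^b z^c of degree d with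
   b < 3 and c < 2. Then w < 6d + 25, and since every monomial of f has degree
   >= d, the coefficients of t^w and t^(w+25) in rho(f) only involve the
   monomials x^p of f of weight w (w + 25 is odd, hence not a weight):
   sum_p f_p = 0 and sum_p p_1 f_p = 0. At most two monomials of weight w lie
   ds-below m, and in each of the six cases these relations force f_m = 0 in
   characteristic 2. Hence the leading ideal of P is (z^2, y^3), generated by
   LM(g1) = z^2 and LM(g2) = y^3. *)

Definition weight (x : mon) : nat := 6 * e1 x + 8 * e2 x + 10 * e3 x.

Lemma odd_weight (x : mon) : ~~ odd (weight x).
Proof. rewrite /weight; lia. Qed.

Lemma weight_ge_mdeg (x : mon) : (6 * mdeg x <= weight x)%N.
Proof. rewrite /weight /mdeg; lia. Qed.

(* (t^6 + t^31)^a is the sum of the t^e, e in rhox_pow_exps a (with multiplicity). *)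
Fixpoint rhox_pow_exps (a : nat) : seq nat :=
  if a is a'.+1 then map (addn 6) (rhox_pow_exps a') ++ map (addn 31) (rhox_pow_exps a')
  else [:: 0%N].

Definition rho_monomial_exps (x : mon) : seq nat :=
  map (addn (8 * e2 x + 10 * e3 x)) (rhox_pow_exps (e1 x)).

Lemma count_mem_shift (s : seq nat) c n :
  count_mem n (map (addn c) s) = if (c <= n)%N then count_mem (n - c)%N s else 0%N.
Proof.
rewrite count_map; case: leqP => h; first by apply: eq_count => e /=; lia.
by rewrite (eq_count (a2 := pred0)) ?count_pred0 // => e /=; lia.
Qed.

Lemma count_rhox_pow_exps_low a n : (n < 6 * a + 50)%N ->
  count_mem n (rhox_pow_exps a) = ((n == 6 * a) + (n == 6 * a + 25) * a)%N.
Proof.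
elim: a n => [|a IHa] n n_lt.
  by rewrite /= !muln0 !addn0 eq_sym.
rewrite [rhox_pow_exps _]/= count_cat !count_mem_shift.
by case: (leqP 6 n) => n6; case: (leqP 31 n) => n31; rewrite ?IHa; lia.
Qed.

Lemma count_rho_monomial_exps_low (x : mon) n : (n < 6 * mdeg x + 50)%N ->
  count_mem n (rho_monomial_exps x) = ((n == weight x) + (n == weight x + 25) * e1 x)%N.
Proof.
move=> n_lt; rewrite count_mem_shift /weight; case: leqP => n_ge; last by lia.
by rewrite count_rhox_pow_exps_low; rewrite /mdeg in n_lt; lia.
Qed.

Section Rho.
Variable K : fieldType.

Definition sum_box n1 n2 n3 (F : mon -> K) : K :=
  \sum_(i < n1) \sum_(j < n2) \sum_(k < n3) F ((i : nat, j : nat), k : nat).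

Lemma eq_sum_box n1 n2 n3 (F G : mon -> K) :
  (forall i j k, (i < n1)%N -> (j < n2)%N -> (k < n3)%N -> F ((i, j), k) = G ((i, j), k)) ->
  sum_box n1 n2 n3 F = sum_box n1 n2 n3 G.
Proof. by move=> FG; do 3![apply: eq_bigr => ? _]; apply: FG. Qed.

Lemma sum_boxD n1 n2 n3 (F G : mon -> K) :
  sum_box n1 n2 n3 (fun x => F x + G x) = sum_box n1 n2 n3 F + sum_box n1 n2 n3 G.
Proof.
rewrite /sum_box -big_split; apply: eq_bigr => i _; rewrite -big_split.
by apply: eq_bigr => j _; rewrite -big_split.
Qed.

Lemma sum_ord_if_eq n (b : bool) a (v : K) :
  \sum_(k < n) (if b && ((k : nat) == a) then v else 0) =
  if b then (if (a < n)%N then v else 0) else 0.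
Proof.
case: b; last by rewrite big1.
case: (ltnP a n) => h.
  rewrite (bigD1 (Ordinal h)) //= eqxx big1 ?addr0 // => i ia.
  by rewrite ifF //; apply: contraNF ia => /eqP ia; apply/eqP/val_inj.
by rewrite big1 // => i _; rewrite ifF //; apply/eqP => ia; have := ltn_ord i; lia.
Qed.

Lemma sum_box_pt n1 n2 n3 (p : mon) (v : K) :
  sum_box n1 n2 n3 (fun x => if x == p then v else 0) =
  if [&& (e1 p < n1)%N, (e2 p < n2)%N & (e3 p < n3)%N] then v else 0.
Proof.
case: p => [[p1 p2] p3]; rewrite /sum_box /e1 /e2 /e3 /=.
under eq_bigr => i _ do under eq_bigr => j _ do
  (under eq_bigr => k _ do rewrite !xpair_eqE; rewrite sum_ord_if_eq).
under eq_bigr => i _ do rewrite sum_ord_if_eq.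
rewrite (sum_ord_if_eq _ true).
by case: (p1 < n1)%N; case: (p2 < n2)%N; case: (p3 < n3)%N.
Qed.

Lemma sum_box_big n1 n2 n3 (s : seq mon) (G : mon -> mon -> K) :
  sum_box n1 n2 n3 (fun x => \sum_(p <- s) G p x) = \sum_(p <- s) sum_box n1 n2 n3 (G p).
Proof.
rewrite /sum_box; under eq_bigr => i _ do under eq_bigr => j _ do rewrite exchange_big.
by under eq_bigr => i _ do rewrite exchange_big; rewrite exchange_big.
Qed.

Lemma sum_box_seq n (s : seq mon) (F : mon -> K) :
  uniq s -> (forall p, p \in s -> [&& (e1 p < n)%N, (e2 p < n)%N & (e3 p < n)%N]) ->
  (forall x, x \notin s -> F x = 0) -> sum_box n n n F = \sum_(p <- s) F p.
Proof.
move=> s_uniq s_box F0.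
rewrite (@eq_sum_box _ _ _ _ (fun x => \sum_(p <- s) if x == p then F p else 0)).
  rewrite sum_box_big big_seq [RHS]big_seq; apply: eq_bigr => p ps.
  by rewrite sum_box_pt s_box.
move=> i j k _ _ _; set x := (_, _, _).
have [xs|xs] := boolP (x \in s); last first.
  by rewrite F0 // big1_seq // => p /andP[_ ps]; case: eqP => // xp; rewrite xp ps in xs.
rewrite (big_rem _ xs) eqxx big1_seq => [|p /andP[_ ps]]; first by rewrite [RHS]addr0.
by case: eqP => // xp; rewrite -xp mem_rem_uniqF in ps.
Qed.

Lemma usmul_tpowl k (q : us K) n :
  usmul (tpow K k) q n = if (k <= n)%N then q (n - k)%N else 0.
Proof.
rewrite /usmul /tpow; case: leqP => kn.
  have kn' : (k < n.+1)%N by lia.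
  rewrite (bigD1 (Ordinal kn')) //= eqxx mul1r big1 ?addr0 // => i ik.
  by rewrite ifF ?mul0r //; apply: contraNF ik => /eqP ik; apply/eqP/val_inj.
by rewrite big1 // => i _; rewrite ifF ?mul0r //; apply/eqP => ik; have := ltn_ord i; lia.
Qed.

Lemma usmulC (p q : us K) n : usmul p q n = usmul q p n.
Proof.
rewrite /usmul (reindex_inj rev_ord_inj) /=; apply: eq_bigr => i _.
by rewrite mulrC subKn // -ltnS.
Qed.

Lemma usmulDl (p p' q : us K) n :
  usmul (fun i => p i + p' i) q n = usmul p q n + usmul p' q n.
Proof. by rewrite /usmul -big_split; apply: eq_bigr => i _; rewrite mulrDl. Qed.

Lemma eq_usmul (p p' q q' : us K) n :
  p =1 p' -> q =1 q' -> usmul p q n = usmul p' q' n.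
Proof. by move=> pp' qq'; apply: eq_bigr => i _; rewrite pp' qq'. Qed.

Lemma uspow_tpow k b : uspow (tpow K k) b =1 tpow K (k * b).
Proof.
elim: b => [|b IHb] n; first by rewrite muln0.
rewrite /uspow iterS -/(uspow _ b) usmul_tpowl /tpow; case: leqP => kn.
  by rewrite IHb /tpow (_ : (n - k == k * b)%N = (n == k * b.+1)%N) //; lia.
by rewrite ifF //; apply/negbTE; lia.
Qed.

Lemma uspow_rhox a n : uspow (rho_x K) a n = (count_mem n (rhox_pow_exps a))%:R.
Proof.
elim: a n => [|a IHa] n; first by rewrite /= /us1 eq_sym; case: eqP.
rewrite /uspow iterS -/(uspow _ a) usmulDl !usmul_tpowl [rhox_pow_exps _]/=.
by rewrite count_cat natrD !count_mem_shift; do 2!case: ifP => _; rewrite ?IHa.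
Qed.

Definition rho_monomial (x : mon) : us K :=
  usmul (uspow (rho_x K) (e1 x)) (usmul (uspow (rho_y K) (e2 x)) (uspow (rho_z K) (e3 x))).

Lemma rho_monomial_count x n : rho_monomial x n = (count_mem n (rho_monomial_exps x))%:R.
Proof.
have yz : usmul (uspow (rho_y K) (e2 x)) (uspow (rho_z K) (e3 x)) =1
          tpow K (8 * e2 x + 10 * e3 x).
  move=> i; rewrite (eq_usmul _ (uspow_tpow _ _) (uspow_tpow _ _)) usmul_tpowl /tpow.
  case: leqP => i_ge; last by rewrite ifF //; apply/negbTE; lia.
  by rewrite (_ : (i - 8 * e2 x == 10 * e3 x)%N = (i == 8 * e2 x + 10 * e3 x)%N) //; lia.
rewrite /rho_monomial (eq_usmul _ (fun i => erefl) yz) usmulC usmul_tpowl.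
by rewrite count_mem_shift; case: leqP; rewrite ?uspow_rhox.
Qed.

Lemma rho_monomial_low x n : (n < 6 * mdeg x + 50)%N ->
  rho_monomial x n = (n == weight x)%:R + (n == weight x + 25)%:R * (e1 x)%:R.
Proof. by move=> n_lt; rewrite rho_monomial_count count_rho_monomial_exps_low // natrD natrM. Qed.

Lemma rhoE (f : ps K) n :
  rho f n = sum_box n.+1 n.+1 n.+1 (fun x => f x * rho_monomial x n).
Proof. by []. Qed.

Lemma rhoD (f g : ps K) n : rho (psadd f g) n = rho f n + rho g n.
Proof. by rewrite !rhoE -sum_boxD; apply: eq_sum_box => *; rewrite mulrDl. Qed.

Lemma rho_psmon x n : rho (psmon K x) n = rho_monomial x n.
Proof.
rewrite rhoE (@eq_sum_box _ _ _ _ (fun y => if y == x then rho_monomial x n else 0)).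
  rewrite sum_box_pt; case: ifP => // /negbT x_out.
  rewrite rho_monomial_low; last by rewrite /mdeg; lia.
  have [-> ->] : (n == weight x) = false /\ (n == weight x + 25)%N = false.
    by rewrite /weight; lia.
  by rewrite mul0r addr0.
by move=> i j k _ _ _; rewrite /psmon; case: eqP => [->|_]; rewrite ?mul1r ?mul0r.
Qed.

Lemma rho_sum_seq (f : ps K) n (s : seq mon) :
  uniq s -> {in s, forall p, weight p <= n}%N ->
  (forall x, x \notin s -> f x * rho_monomial x n = 0) ->
  rho f n = \sum_(p <- s) f p * rho_monomial p n.
Proof.
move=> s_uniq s_le out0; rewrite rhoE (sum_box_seq s_uniq) // => p /s_le.
by rewrite /weight; lia.
Qed.

Lemma weight_relations (f : ps K) d w (s : seq mon) :
  P f -> (forall x, f x != 0 -> (d <= mdeg x)%N) -> (w < 6 * d + 25)%N -> ~~ odd w ->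
  uniq s -> {in s, forall p, weight p = w} ->
  (forall x, f x != 0 -> weight x = w -> x \in s) ->
  \sum_(p <- s) f p = 0 /\ \sum_(p <- s) f p * (e1 p)%:R = 0.
Proof.
move=> Pf supp_deg w_lt w_even s_uniq s_w s_supp.
have low n x : (n < 6 * d + 50)%N -> f x * rho_monomial x n =
    f x * ((n == weight x)%:R + (n == weight x + 25)%:R * (e1 x)%:R).
  have [-> | fx] := eqVneq (f x) 0; first by rewrite !mul0r.
  by move=> n_lt; rewrite rho_monomial_low //; have := supp_deg x fx; lia.
(* Monomials of degree >= d have weight >= 6d > w - 25, and w + 25 is odd. *)
have rel n (c : mon -> K) : (w <= n < 6 * d + 50)%N ->
    (forall x, f x != 0 -> x \notin s -> (n == weight x) = false /\ (n == weight x + 25)%N = false) ->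
    (forall p, p \in s -> (n == weight p)%:R + (n == weight p + 25)%:R * (e1 p)%:R = c p) ->
    \sum_(p <- s) f p * c p = 0.
  move=> /andP[w_le n_lt] out0 s_c; rewrite -[RHS](Pf n) (@rho_sum_seq _ n s) //.
  - by rewrite big_seq [RHS]big_seq; apply: eq_bigr => p ps; rewrite low // s_c.
  - by move=> p /s_w ->.
  move=> x xs; rewrite low //; have [-> | fx] := eqVneq (f x) 0; first by rewrite mul0r.
  by have [-> ->] := out0 x fx xs; rewrite mul0r addr0 mulr0.
split.
  rewrite (eq_bigr (fun p => f p * 1)) => [|p _]; last by rewrite mulr1.
  apply: (rel w).
  - by rewrite leqnn; lia.
  - move=> x fx xs; have := supp_deg x fx; have := weight_ge_mdeg x.
    by case: (eqVneq (weight x) w) => [/(s_supp x fx)|]; [rewrite (negbTE xs) | lia].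
  - by move=> p /s_w ->; rewrite eqxx (_ : (w == w + 25)%N = false) ?mul0r ?addr0 //; lia.
apply: (rel (w + 25)%N).
- by rewrite leq_addr; lia.
- move=> x fx xs; have := odd_weight x.
  by case: (eqVneq (weight x) w) => [/(s_supp x fx)|]; [rewrite (negbTE xs) | lia].
- by move=> p /s_w ->; rewrite eqxx (_ : (w + 25 == w)%N = false) ?add0r ?mul1r //; lia.
Qed.

Lemma LM_weight_relations (f : ps K) m (s : seq mon) :
  P f -> is_LM f m -> (weight m < 6 * mdeg m + 25)%N ->
  uniq (m :: s) -> all (fun p => weight p == weight m) s ->
  (forall x, ds_gt m x -> weight x = weight m -> x \in s) ->
  f m + \sum_(p <- s) f p = 0 /\ \sum_(p <- s) f p * ((e1 p)%:R - (e1 m)%:R) = 0.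
Proof.
move=> Pf [_ fmax] w_lt s_uniq /allP s_w s_cover.
have [] := @weight_relations f (mdeg m) (weight m) (m :: s) Pf _ w_lt (odd_weight m) s_uniq _ _.
- by move=> x /fmax [-> // | ]; rewrite /ds_gt; lia.
- by move=> p; rewrite inE => /orP[/eqP -> // | /s_w /eqP].
- by move=> x /fmax [-> _ | mx wx]; rewrite inE ?eqxx // s_cover ?orbT.
rewrite !big_cons => sum_f sum_e1; split=> //.
have f_s : \sum_(p <- s) f p = - f m by apply/eqP; rewrite -addr_eq0 addrC sum_f.
have e1_s : \sum_(p <- s) f p * (e1 p)%:R = - (f m * (e1 m)%:R).
  by apply/eqP; rewrite -addr_eq0 addrC sum_e1.
under eq_bigr do rewrite mulrBr.
by rewrite sumrB -mulr_suml f_s e1_s mulNr subrr.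
Qed.
End Rho.

Definition mon_add (x y : mon) : mon := ((e1 x + e1 y, e2 x + e2 y), e3 x + e3 y)%N.

Section Ideals.
Variable K : fieldType.

Definition LM_set (I : ps K -> Prop) (s : ps K) : Prop :=
  exists f m, I f /\ ps_nonzero f /\ is_LM f m /\ s = psmon K m.

Lemma psmulE (f g : ps K) a :
  psmul f g a = sum_box (e1 a).+1 (e2 a).+1 (e3 a).+1
    (fun y => f y * g (((e1 a - e1 y)%N, (e2 a - e2 y)%N), (e3 a - e3 y)%N)).
Proof. by []. Qed.

Lemma psmul_psmon (r : ps K) m a :
  psmul r (psmon K m) a =
  if [&& e1 m <= e1 a, e2 m <= e2 a & e3 m <= e3 a]%N
  then r (((e1 a - e1 m)%N, (e2 a - e2 m)%N), (e3 a - e3 m)%N) else 0.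
Proof.
case: m a => [[m1 m2] m3] [[a1 a2] a3]; rewrite /e1 /e2 /e3 /=.
set d := ((a1 - m1, a2 - m2), a3 - m3)%N; set dvd := [&& _, _ & _].
rewrite psmulE (@eq_sum_box K _ _ _ _ (fun y => if y == d then (if dvd then r d else 0) else 0)).
  by rewrite sum_box_pt; case: ifP => // /negP; case; rewrite /d /e1 /e2 /e3 /=; lia.
move=> i j k i_le j_le k_le; rewrite /psmon /d /dvd /e1 /e2 /e3 /= !xpair_eqE.
rewrite /e1 /e2 /e3 /= in i_le j_le k_le.
have -> : ((a1 - i == m1) && (a2 - j == m2) && (a3 - k == m3))%N =
  ((i == a1 - m1) && (j == a2 - m2) && (k == a3 - m3) && [&& m1 <= a1, m2 <= a2 & m3 <= a3])%N.
  by apply/idP/idP; lia.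
case: (i =P (a1 - m1)%N) => [->|_]; last by rewrite mulr0.
case: (j =P (a2 - m2)%N) => [->|_]; last by rewrite andbF mulr0.
case: (k =P (a3 - m3)%N) => [->|_]; last by rewrite andbF mulr0.
by rewrite /=; case: ifP; rewrite ?mulr1 ?mulr0.
Qed.

Lemma psmul_psmon_add (r : ps K) q m :
  psmul r (psmon K (mon_add q m)) = psmul (psmul r (psmon K q)) (psmon K m).
Proof.
apply: functional_extensionality => a; rewrite !psmul_psmon.
case: q m a => [[q1 q2] q3] [[m1 m2] m3] [[a1 a2] a3]; rewrite /mon_add /e1 /e2 /e3 /=.
case: ifP => dvd_qm; case: ifP => dvd_m //.
- rewrite ifT; last by move: dvd_qm; lia.
  by congr r; congr (_, _); first congr (_, _); lia.
- by move: dvd_qm dvd_m; lia.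
- by case: ifP => // dvd_q; move: dvd_qm dvd_m dvd_q; lia.
Qed.

Lemma ideal_gen_mono (S S' : ps K -> Prop) h :
  (forall s, S s -> S' s) -> ideal_gen S h -> ideal_gen S' h.
Proof. by move=> SS' [l [lS ->]]; exists l; split=> // p /lS /SS'. Qed.

Lemma ideal_gen_monomial_multiples (S S' : ps K -> Prop) h :
  (forall s, S s -> exists q m, S' (psmon K m) /\ s = psmon K (mon_add q m)) ->
  ideal_gen S h -> ideal_gen S' h.
Proof.
move=> S_mul [l [lS ->]]; elim: l lS => [|[r s] l IHl] lS; first by exists [::].
have [l' [l'S' l_l']] := IHl (fun p lp => lS p (or_intror lp)).
have [q [m [S'm s_qm]]] := S_mul s (lS _ (or_introl erefl)).
exists ((psmul r (psmon K q), psmon K m) :: l'); split; first by move=> p [<- | /l'S'].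
by rewrite /= l_l' s_qm psmul_psmon_add.
Qed.

Lemma LM_set_psmon (I : ps K -> Prop) f m : I f -> is_LM f m -> LM_set I (psmon K m).
Proof. by move=> If [fm fmax]; exists f, m; do !split=> //; exists m. Qed.

Lemma is_LM_g1 : is_LM (g1 K) ((0, 0), 2)%N.
Proof.
split; first by rewrite /g1 /psadd /X /psmon /= !addr0 oner_neq0.
move=> [[i j] k] nz; have [-> | ne] := eqVneq ((i, j), k) ((0, 0), 2)%N; [by left | right].
move: nz ne; rewrite /g1 /psadd /X /psmon !xpair_eqE /ds_gt /mdeg /e1 /e2 /e3 /=.
by case: ifP => h1; case: ifP => h2; case: ifP => h3; rewrite ?addr0 ?add0r ?eqxx // => _ _; lia.
Qed.

Lemma is_LM_g2 : is_LM (g2 K) ((0, 3), 0)%N.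
Proof.
split; first by rewrite /g2 /psadd /X /psmon /= !addr0 oner_neq0.
move=> [[i j] k] nz; have [-> | ne] := eqVneq ((i, j), k) ((0, 3), 0)%N; [by left | right].
move: nz ne; rewrite /g2 /psadd /X /psmon !xpair_eqE /ds_gt /mdeg /e1 /e2 /e3 /=.
by case: ifP => h1; case: ifP => h2; case: ifP => h3; case: ifP => h4; rewrite ?addr0 ?add0r ?eqxx // => _ _; lia.
Qed.
End Ideals.

Section CharacteristicTwo.
Variables (K : fieldType) (char2 : (2%N \in [pchar K])%R).

Lemma natr_odd m : (m%:R : K) = (odd m)%:R.
Proof.
elim: m => [|m IHm] //; rewrite -natr1 IHm /=.
by case: (odd m); rewrite ?add0r // -[1 + 1]/(2%:R) (pcharf0 char2).
Qed.

Lemma rho_even_exps (f : ps K) (s : seq nat) :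
  all (fun e => ~~ odd (count_mem e s)) s -> (forall n, rho f n = (count_mem n s)%:R) -> P f.
Proof.
move=> /allP s_even rho_f n; rewrite rho_f natr_odd.
by have [/s_even/negbTE -> | /count_memPn ->] := boolP (n \in s).
Qed.

Lemma g1_in_P : P (g1 K).
Proof.
apply: (rho_even_exps (s := rho_monomial_exps ((0, 0), 2) ++ rho_monomial_exps ((2, 1), 0) ++ rho_monomial_exps ((0, 5), 3)))%N => // n.
by rewrite !rhoD !rho_psmon !rho_monomial_count !count_cat !natrD.
Qed.

Lemma g2_in_P : P (g2 K).
Proof.
apply: (rho_even_exps (s := rho_monomial_exps ((0, 3), 0) ++ rho_monomial_exps ((4, 0), 0) ++
                          rho_monomial_exps ((0, 3), 5) ++ rho_monomial_exps ((2, 4), 3)))%N => // n.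
by rewrite !rhoD !rho_psmon !rho_monomial_count !count_cat !natrD.
Qed.

Ltac mon_lia :=
  try case=> [[? ?] ?]; rewrite /ds_gt /weight /mdeg /e1 /e2 /e3 /=; intros;
  rewrite ?inE ?xpair_eqE; lia.

Lemma LM_P_dvd (f : ps K) m : P f -> is_LM f m -> (2 <= e3 m)%N \/ (3 <= e2 m)%N.
Proof.
case: m => [[a b] c] Pf LMf; rewrite /e2 /e3 /=.
have [c_ge | c_lt] := leqP 2 c; first by left.
have [b_ge | b_lt] := leqP 3 b; first by right.
have rel s := LM_weight_relations (s := s) Pf LMf.
have char2_3 : 3%:R = 1 :> K by rewrite natr_odd.
exfalso; case: LMf => /eqP fm _; apply: fm.
case: b b_lt rel => [|[|[|b]]] // _ rel; case: c c_lt rel => [|[|c]] // _ rel.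
- by have [] := rel [::]; try mon_lia; rewrite big_nil addr0.
- by have [] := rel [::]; try mon_lia; rewrite big_nil addr0.
- by have [] := rel [::]; try mon_lia; rewrite big_nil addr0.
- have [] := rel [:: ((3 + a, 0), 0)]%N; try mon_lia.
  rewrite !big_seq1 /e1 /= natrD addrK char2_3 mulr1 => sum_f f_q.
  by rewrite f_q addr0 in sum_f.
- have [] := rel [:: ((1 + a, 0), 1)]%N; try mon_lia.
  rewrite !big_seq1 /e1 /= natrD addrK mulr1 => sum_f f_q.
  by rewrite f_q addr0 in sum_f.
- have [] := rel [:: ((1 + a, 0), 2); ((3 + a, 1), 0)]%N; try mon_lia.
  rewrite !big_cons !big_nil /e1 /= !natrD !addrK char2_3 !mulr1 !addr0 => sum_f f_qr.
  by rewrite f_qr addr0 in sum_f.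
Qed.

Lemma LM_P_multiple (f : ps K) m : P f -> is_LM f m ->
  exists q m', LM_set (fun g => In g [:: g1 K; g2 K]) (psmon K m') /\ m = mon_add q m'.
Proof.
case: m => [[a b] c] Pf /[dup] LMf /(LM_P_dvd Pf); rewrite /e2 /e3 /= => -[c_ge | b_ge].
- exists ((a, b), c - 2)%N, ((0, 0), 2)%N; split; first by apply: LM_set_psmon (is_LM_g1 K); left.
  by rewrite /mon_add /e1 /e2 /e3 /= !addn0 subnK.
- exists ((a, b - 3), c)%N, ((0, 3), 0)%N; split; first by apply: LM_set_psmon (is_LM_g2 K); right; left.
  by rewrite /mon_add /e1 /e2 /e3 /= !addn0 subnK.
Qed.
End CharacteristicTwo.

Theorem mainTheorem11 (K : fieldType) (char2 : (2%N \in [pchar K])%R) :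
  standard_basis (@P K) [:: g1 K; g2 K].
Proof.
have G_P g : In g [:: g1 K; g2 K] -> P g.
  by case=> [<- | [<- | []]]; [exact: g1_in_P | exact: g2_in_P].
split=> // h; split.
  by apply: ideal_gen_mono => s [g [m [/G_P Pg LMg]]]; exists g, m.
apply: ideal_gen_monomial_multiples => s [f [m [Pf [_ [LMf ->]]]]].
have [q [m' [LMm' ->]]] := LM_P_multiple char2 Pf LMf.
by exists q, m'.
Qed.
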